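(* For a unital commutative semiring $X$, the following are equivalent: (1) $X$ is fully elementary, upper-bound and $2$-cancellative; (2) $X$ is Frobenius and idempotent.
   Context: A semiring $(X,+,0,\cdot)$: $(X,+,0)$ commutative monoid, $(X,\cdot)$ semigroup, distributivity, $0$ absorbing. Unital: has a multiplicative unit $1$; commutative: $\cdot$ commutative; idempotent: $x+x=x$ for all $x$. Intrinsic order: $a\le b$ iff $a+x=b$ for some $x\in X$; $X$ is upper-bound if this preorder is antisymmetric. $X$ is $2$-cancellative if $x+x=y+y$ implies $x=y$. $X$ is Frobenius if $(x+y)^n=x^n+y^n$ for all $x,y\in X$ and all integers $n\ge1$. Polynomials in $n$ variables are functions $X^n\to X$ represented by formal expressions $\sum_{k=1}^m a_k\prod_{j=1}^n x_j^{d_{k,j}}$ ($a_k\in X$). A polynomial is symmetric if represented by an expression which, with each monomial $a_k\prod_j x_j^{d_{k,j}}$, contains all monomials $a_k\prod_j x_{\sigma(j)}^{d_{k,j}}$, $\sigma\in S_n$ (up to reordering factors). $e_j$ ($1\le j\le n$) is the sum of all products of $j$ distinct variables among $x_1,\dots,x_n$. $X$ is $n$-elementary if every symmetric polynomial $p$ in $n$ variables can be written as $p(x_1,\dots,x_n)=r(e_1,\dots,e_n)$ for some polynomial $r$, for all $x_i\in X$; $X$ is fully elementary if it is $n$-elementary for every $n\in\mathbb{N}$. *)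

From HB Require Import structures.
From mathcomp Require Import all_boot all_order all_algebra all_fingroup.
Set Implicit Arguments. Unset Strict Implicit. Unset Printing Implicit Defensive.
Import GRing.Theory.
Local Open Scope ring_scope.

(* A unital commutative semiring is a comPzSemiRingType (0 = 1 allowed). *)

(* A formal polynomial expression in n variables with coefficients in X:
   a finite list of monomials (a_k, d_k), standing for
   sum_k a_k * prod_j x_j ^ (d_k j). *)
Definition monom (X : comPzSemiRingType) (n : nat) := (X * {ffun 'I_n -> nat})%type.
Definition fpoly (X : comPzSemiRingType) (n : nat) := seq (monom X n).

Definition peval (X : comPzSemiRingType) (n : nat) (p : fpoly X n) (x : 'I_n -> X) : X :=
  \sum_(m <- p) (m.1 * \prod_(j < n) x j ^+ (m.2 j)).

Definition mperm (X : comPzSemiRingType) (n : nat) (s : 'S_n) (m : monom X n) : monom X n :=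
  (m.1, [ffun j => m.2 (s j)]).

Definition symmetric_expr (X : comPzSemiRingType) (n : nat) (p : fpoly X n) : Prop :=
  forall s : 'S_n, perm_eq p (map (mperm s) p).

Definition esym (X : comPzSemiRingType) (n j : nat) (x : 'I_n -> X) : X :=
  \sum_(A : {set 'I_n} | #|A| == j) \prod_(i in A) x i.

Definition n_elementary (X : comPzSemiRingType) (n : nat) : Prop :=
  forall p : fpoly X n, symmetric_expr p ->
  exists r : fpoly X n, forall x : 'I_n -> X,
    peval p x = peval r (fun j : 'I_n => esym (j.+1)%N x).

Definition fully_elementary (X : comPzSemiRingType) : Prop :=
  forall n : nat, n_elementary X n.

Definition intrinsic_le (X : comPzSemiRingType) (a b : X) : Prop :=
  exists x : X, a + x = b.

Definition upper_bound (X : comPzSemiRingType) : Prop :=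
  forall a b : X, intrinsic_le a b -> intrinsic_le b a -> a = b.

Definition two_cancellative (X : comPzSemiRingType) : Prop :=
  forall x y : X, x + x = y + y -> x = y.

Definition frobenius (X : comPzSemiRingType) : Prop :=
  forall (x y : X) (n : nat), (1 <= n)%N -> (x + y) ^+ n = x ^+ n + y ^+ n.

Definition idempotent_sr (X : comPzSemiRingType) : Prop :=
  forall x : X, x + x = x.

(* In an idempotent semiring, a <= b :<-> a + b = b is an order compatible with
   sums and products, in which finite sums are joins.  The Frobenius identity gives
   u * v^b <= u^(b+1) + v^(b+1), so moving one unit of exponent from one variable to
   another never leaves the orbit sum O_c of a monomial x^c under permutations of the
   variables.  Hence O_c = O_(c-1) * e_k, where k is the number of positive exponents
   of c, and by induction every orbit sum, and then every symmetric polynomial, is a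
   polynomial in the elementary symmetric ones.
   Conversely, if x^k + y^k = r(x + y, xy), evaluating r at (x + y, 0) gives
   (x + y)^k <= x^k + y^k in the intrinsic order, the binomial expansion gives the
   reverse inequality, and the upper-bound property yields the Frobenius identity;
   2-cancellativity applied to (1 + 1)^2 = 1 + 1 then yields idempotence. *)

From HB Require Import structures.
From mathcomp Require Import all_boot all_order all_algebra all_fingroup.
From mathcomp Require Import ring.
(* Imported last, so that [esym] is the elementary symmetric polynomial. *)
Set Implicit Arguments. Unset Strict Implicit. Unset Printing Implicit Defensive.
Import GRing.Theory.
Local Open Scope ring_scope.

Lemma eq_cardsD (T : finType) (A B : {set T}) : #|A| = #|B| -> #|A :\: B| = #|B :\: A|.
Proof. by move=> AB; rewrite !cardsD AB setIC. Qed.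

Section IdempotentOrder.
Variable X : comPzSemiRingType.
Hypothesis idem : idempotent_sr X.

Definition idem_le (a b : X) := a + b = b.

Lemma idem_le_refl a : idem_le a a. Proof. exact: idem. Qed.

Lemma idem_le_trans a b c : idem_le a b -> idem_le b c -> idem_le a c.
Proof. by rewrite /idem_le => ab <-; rewrite addrA ab. Qed.

Lemma idem_le_anti a b : idem_le a b -> idem_le b a -> a = b.
Proof. by rewrite /idem_le => ab ba; rewrite -ab addrC ba. Qed.

Lemma idem_le_addl a b : idem_le a (a + b).
Proof. by rewrite /idem_le addrA idem. Qed.

Lemma idem_le_addr a b : idem_le b (a + b).
Proof. by rewrite addrC; apply: idem_le_addl. Qed.

Lemma idem_le_add a b c : idem_le a c -> idem_le b c -> idem_le (a + b) c.
Proof. by rewrite /idem_le => ac bc; rewrite -addrA bc ac. Qed.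

Lemma idem_le_mull a b z : idem_le a b -> idem_le (z * a) (z * b).
Proof. by rewrite /idem_le -mulrDr => ->. Qed.

Lemma idem_le_mulr a b z : idem_le a b -> idem_le (a * z) (b * z).
Proof. by rewrite /idem_le -mulrDl => ->. Qed.

Lemma idem_le_mul a b c d : idem_le a b -> idem_le c d -> idem_le (a * c) (b * d).
Proof. by move=> ab cd; apply: idem_le_trans (idem_le_mulr c ab) (idem_le_mull b cd). Qed.

Lemma idem_le_expr a b k : idem_le a b -> idem_le (a ^+ k) (b ^+ k).
Proof.
move=> ab; elim: k => [|k IH]; first exact: idem_le_refl.
by rewrite !exprS; apply: idem_le_mul.
Qed.

Lemma idem_le_sum (I : Type) (r : seq I) (P : pred I) (F : I -> X) b :
  (forall i, P i -> idem_le (F i) b) -> idem_le (\sum_(i <- r | P i) F i) b.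
Proof.
move=> Fb; apply: (big_ind (idem_le ^~ b)) => //; first by rewrite /idem_le add0r.
by move=> u v; apply: idem_le_add.
Qed.

Lemma idem_le_sum_mem (I : eqType) (r : seq I) (F : I -> X) i :
  i \in r -> idem_le (F i) (\sum_(j <- r) F j).
Proof. by move=> ri; rewrite (big_rem i) //=; apply: idem_le_addl. Qed.

Lemma idem_le_sum_fin (I : finType) (P : pred I) (F : I -> X) i :
  P i -> idem_le (F i) (\sum_(j | P j) F j).
Proof. by move=> Pi; rewrite (bigD1 i) //=; apply: idem_le_addl. Qed.

Lemma idem_mulrn (a : X) m : (0 < m)%N -> a *+ m = a.
Proof. by case: m => // m _; elim: m => // m IH; rewrite mulrSr IH idem. Qed.

Lemma idem_leP a b : intrinsic_le a b <-> idem_le a b.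
Proof.
split=> [[z <-]|ab]; last by exists b.
by rewrite /idem_le addrA idem.
Qed.

End IdempotentOrder.

Section PolynomialExpressions.
Variables (X : comPzSemiRingType) (n : nat).
Implicit Types (x : 'I_n -> X) (r : fpoly X n).

Definition mon x (f : 'I_n -> nat) : X := \prod_j x j ^+ f j.

Definition orbit_sum (c : 'I_n -> nat) x : X := \sum_(s : 'S_n) mon x (fun l => c (s l)).

Definition esyms x : 'I_n -> X := fun j => esym j.+1 x.

Definition pscale (a : X) r : fpoly X n := [seq (a * m.1, m.2) | m <- r].

Definition pmulX (j : 'I_n) r : fpoly X n :=
  [seq (m.1, [ffun l => m.2 l + (l == j)]%N) | m : monom X n <- r].

Lemma eq_mon x (f g : 'I_n -> nat) : f =1 g -> mon x f = mon x g.
Proof. by move=> fg; apply: eq_bigr => l _; rewrite fg. Qed.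

Lemma mon_split x (f : 'I_n -> nat) i j : i != j ->
  mon x f = x i ^+ f i * x j ^+ f j * \prod_(l | (l != i) && (l != j)) x l ^+ f l.
Proof. by move=> ij; rewrite /mon (bigD1 i) // (bigD1 j) 1?eq_sym //= mulrA. Qed.

Lemma mon_addset x (f : 'I_n -> nat) (T : {set 'I_n}) :
  mon x (fun l => f l + (l \in T))%N = mon x f * \prod_(l in T) x l.
Proof.
rewrite /mon [X in _ * X]big_mkcond -big_split /=.
by apply: eq_bigr => l _; rewrite exprD; case: (l \in T).
Qed.

Lemma eq_peval r x y : x =1 y -> peval r x = peval r y.
Proof. by move=> xy; apply: eq_bigr => m _; under eq_bigr do rewrite xy. Qed.

Lemma peval_cat r1 r2 x : peval (r1 ++ r2) x = peval r1 x + peval r2 x.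
Proof. exact: big_cat. Qed.

Lemma peval_scale a r x : peval (pscale a r) x = a * peval r x.
Proof. by rewrite /peval big_map mulr_sumr; apply: eq_bigr => m _; rewrite mulrA. Qed.

Lemma peval_mulX j r x : peval (pmulX j r) x = peval r x * x j.
Proof.
rewrite /peval big_map mulr_suml; apply: eq_bigr => m _ /=; rewrite -mulrA.
congr (_ * _); have := mon_addset x m.2 [set j]; rewrite big_set1 => <-.
by apply: eq_mon => l; rewrite ffunE inE.
Qed.

End PolynomialExpressions.

Section FrobeniusIdempotent.
Variable X : comPzSemiRingType.
Hypotheses (idem : idempotent_sr X) (frob : frobenius X).

Lemma idem_le_mixed (u v : X) b : idem_le (u * v ^+ b) (u ^+ b.+1 + v ^+ b.+1).
Proof.
rewrite -frob // exprS; apply: idem_le_mul; first exact: idem_le_addl.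
by apply: idem_le_expr; [|apply: idem_le_addr].
Qed.

Variable n : nat.
Implicit Types x : 'I_n -> X.

Lemma mon_exchange_le x (f g h : 'I_n -> nat) i j : i != j ->
  f i = 1%N -> g i = (f j).+1 -> g j = 0%N -> h i = 0%N -> h j = (f j).+1 ->
  (forall l, l != i -> l != j -> g l = f l /\ h l = f l) ->
  idem_le (mon x f) (mon x g + mon x h).
Proof.
move=> ij fi gi gj hi hj gh; rewrite !(mon_split _ _ ij) fi gi gj hi hj.
have rest k : (forall l, l != i -> l != j -> k l = f l) ->
    \prod_(l | (l != i) && (l != j)) x l ^+ k l = \prod_(l | (l != i) && (l != j)) x l ^+ f l.
  by move=> kf; apply: eq_bigr => l /andP[li lj]; rewrite kf.
rewrite (rest g) => [|l li lj]; last by case: (gh l li lj).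
rewrite (rest h) => [|l li lj]; last by case: (gh l li lj).
rewrite -mulrDl; apply: idem_le_mulr; rewrite !expr0 mulr1 mul1r expr1.
exact: idem_le_mixed.
Qed.

Section OrbitSumStep.
Variable c : 'I_n -> nat.
Let k := #|[set l | (0 < c l)%N]|.
Let supp (s : 'S_n) := [set l | (0 < c (s l))%N].
Let term x (s : 'S_n) (T : {set 'I_n}) := mon x (fun l => (c (s l)).-1 + (l \in T))%N.

Lemma card_supp s : #|supp s| = k.
Proof.
have -> : supp s = s @^-1: [set l | (0 < c l)%N] by apply/setP => l; rewrite !inE.
exact/card_preimset/perm_inj.
Qed.

Lemma term_supp x s : term x s (supp s) = mon x (fun l => c (s l)).
Proof. by apply: eq_mon => l; rewrite inE; case: (c (s l)) => // m; rewrite addn1. Qed.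

Section Exchange.
Variables (x : 'I_n -> X) (s : 'S_n) (T : {set 'I_n}) (i j : 'I_n).
Hypotheses (iD : i \in T :\: supp s) (jD : j \in supp s :\: T).

Let ci : c (s i) = 0%N.
Proof. by move: iD; rewrite !inE lt0n negbK => /andP[/eqP]. Qed.
Let cj : (0 < c (s j))%N.
Proof. by move: jD; rewrite !inE => /andP[]. Qed.
Let iT : i \in T.
Proof. by move: iD; rewrite !inE => /andP[]. Qed.
Let jT : j \notin T.
Proof. by move: jD; rewrite !inE => /andP[]. Qed.
Let ij : i != j.
Proof. by apply: contraNneq jT => <-. Qed.

Lemma setD_supp_tperm : T :\: supp (tperm i j * s) = (T :\: supp s) :\ i.
Proof.
apply/setP => l; rewrite !inE permM.
have [->|li] := eqVneq l i; first by rewrite tpermL cj.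
have [->|lj] := eqVneq l j; first by rewrite (negbTE jT) !andbF.
by rewrite tpermD // eq_sym.
Qed.

Lemma setD_supp_exchange : (j |: T :\ i) :\: supp s = (T :\: supp s) :\ i.
Proof.
apply/setP => l; rewrite !inE.
have [->|lj] := eqVneq l j; first by rewrite cj (negbTE jT) andbF.
by rewrite andbCA.
Qed.

Lemma card_exchange : #|j |: T :\ i| = #|T|.
Proof. by rewrite cardsU1 (cardsD1 i T) iT !inE (negbTE jT) andbF. Qed.

Lemma term_exchange_le :
  idem_le (term x s T) (term x (tperm i j * s) T + term x s (j |: T :\ i)).
Proof.
apply: (mon_exchange_le _ ij); rewrite ?permM ?tpermL ?tpermR ?ci ?iT ?(negbTE jT) //.
- by rewrite addn1 addn0.
- by rewrite !inE eqxx (negbTE ij).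
- by rewrite !inE eqxx addn1 addn0.
- move=> l li lj; rewrite permM tpermD 1?eq_sym // !inE.
  by rewrite (negbTE lj) li.
Qed.

End Exchange.

(* By induction on #|T :\: supp s|: each exchange moves one point of T into the support. *)
Lemma term_le_orbit_sum x (s : 'S_n) (T : {set 'I_n}) :
  #|T| = k -> idem_le (term x s T) (orbit_sum c x).
Proof.
have [N] := ubnP #|T :\: supp s|; elim: N => // N IH in s T *; rewrite ltnS => leN Tk.
have [TD0|[i iD]] := set_0Vmem (T :\: supp s).
  have -> : T = supp s.
    by apply/eqP; rewrite eqEcard card_supp Tk leqnn andbT -setD_eq0 TD0.
  by rewrite term_supp; apply: idem_le_sum_fin.
have [j jD] : exists j, j \in supp s :\: T.
  apply/set0Pn; rewrite -card_gt0 -eq_cardsD ?card_supp //.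
  by rewrite card_gt0; apply/set0Pn; exists i.
have ltD : (#|(T :\: supp s) :\ i| < N)%N by move: leN; rewrite (cardsD1 i) iD.
apply: idem_le_trans (term_exchange_le x iD jD) _; apply: idem_le_add; apply: IH.
- by rewrite setD_supp_tperm.
- exact: Tk.
- by rewrite setD_supp_exchange.
- by rewrite (card_exchange iD jD).
Qed.

Lemma orbit_sum_pred_esym x :
  orbit_sum c x = orbit_sum (fun l => (c l).-1) x * esym k x.
Proof.
have -> : orbit_sum (fun l => (c l).-1) x * esym k x =
    \sum_(s : 'S_n) \sum_(T : {set 'I_n} | #|T| == k) term x s T.
  rewrite /orbit_sum /esym mulr_suml; apply: eq_bigr => s _; rewrite mulr_sumr.
  by apply: eq_bigr => T _; rewrite /term mon_addset.
apply: idem_le_anti; apply: idem_le_sum => s _.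
  rewrite (bigD1 s) // (bigD1 (supp s)) /=; last by rewrite card_supp.
  by rewrite term_supp -addrA; apply: idem_le_addl.
by apply: idem_le_sum => T /eqP; apply: term_le_orbit_sum.
Qed.

End OrbitSumStep.

Lemma orbit_sum0 x (c : 'I_n -> nat) : c =1 (fun=> 0%N) -> orbit_sum c x = 1.
Proof.
move=> c0; rewrite /orbit_sum (eq_bigr (fun=> 1)) => [|s _]; last first.
  by rewrite /mon big1 // => l _; rewrite c0 expr0.
by rewrite sumr_const card_Sn idem_mulrn ?fact_gt0.
Qed.

Lemma orbit_sum_esyms (c : 'I_n -> nat) :
  exists r : fpoly X n, forall x, orbit_sum c x = peval r (esyms x).
Proof.
have [N] := ubnP (\sum_l c l)%N; elim: N => // N IH in c *; rewrite ltnS => leN.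
case: (pickP (fun l => 0 < c l)%N) => [l0 cl0|c0]; last first.
  exists [:: (1, [ffun=> 0%N])] => x.
  rewrite orbit_sum0 => [|l]; last by apply/eqP; rewrite -leqn0 leqNgt c0.
  by rewrite /peval big_seq1 mul1r big1 // => j _; rewrite ffunE.
have [r Er] : exists r : fpoly X n,
    forall x, orbit_sum (fun l => (c l).-1) x = peval r (esyms x).
  apply: IH; apply: leq_trans leN; rewrite (bigD1 l0) // [X in (_ < X)%N](bigD1 l0) //=.
  by rewrite -addSn leq_add ?prednK // leq_sum // => l _; apply: leq_pred.
set k := #|[set l | (0 < c l)%N]|.
have k_gt0 : (0 < k)%N by apply/card_gt0P; exists l0; rewrite inE.
have k_le : (k.-1 < n)%N by rewrite prednK // -[n]card_ord max_card.
(* e_k is the variable of index k.-1 of [esyms x]. *)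
exists (pmulX (Ordinal k_le) r) => x.
by rewrite peval_mulX -Er orbit_sum_pred_esym /esyms /= prednK.
Qed.

Lemma peval_orbit_sums (p : fpoly X n) x : symmetric_expr p ->
  peval p x = \sum_(m <- p) m.1 * orbit_sum m.2 x.
Proof.
move=> p_sym; apply: idem_le_anti; rewrite /peval big_seq; apply: idem_le_sum => m pm.
  apply: idem_le_trans _ (idem_le_sum_mem idem (fun m : monom X n => m.1 * orbit_sum m.2 x) pm).
  apply: idem_le_mull; rewrite /orbit_sum (bigD1 1%g) //=.
  rewrite (@eq_mon _ _ x (fun l => m.2 ((1%g : 'S_n) l)) m.2) => [|l]; last by rewrite perm1.
  exact: idem_le_addl.
rewrite /orbit_sum mulr_sumr; apply: idem_le_sum => s _.
have ps : mperm s m \in p by rewrite (perm_mem (p_sym s)) map_f.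
have := idem_le_sum_mem idem (fun m : monom X n => m.1 * mon x m.2) ps.
by rewrite /mon /=; under [X in idem_le (_ * X) _]eq_bigr do rewrite ffunE.
Qed.

Lemma symmetric_esyms (p : fpoly X n) : symmetric_expr p ->
  exists r : fpoly X n, forall x, peval p x = peval r (esyms x).
Proof.
move=> p_sym; suff [r Er] : exists r : fpoly X n, forall x,
    \sum_(m <- p) m.1 * orbit_sum m.2 x = peval r (esyms x).
  by exists r => x; rewrite peval_orbit_sums.
elim: p {p_sym} => [|m p [r Er]]; first by exists [::] => x; rewrite /peval !big_nil.
have [rm Erm] := orbit_sum_esyms m.2.
by exists (pscale m.1 rm ++ r) => x; rewrite big_cons peval_cat peval_scale Erm Er.
Qed.

End FrobeniusIdempotent.

Lemma fully_elementary_of_frobenius (X : comPzSemiRingType) :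
  frobenius X -> idempotent_sr X -> fully_elementary X.
Proof. by move=> frob idem n p; apply: symmetric_esyms. Qed.

Section ElementaryToFrobenius.
Variable X : comPzSemiRingType.

Lemma esym1 n (x : 'I_n -> X) : esym 1 x = \sum_i x i.
Proof.
rewrite /esym (eq_bigl (mem [set [set i] | i : 'I_n])) => [|A]; last first.
  by apply/cards1P/imsetP => [[i ->]|[i _ ->]]; exists i.
rewrite big_imset => [|i j _ _]; last exact: set1_inj.
by apply: eq_big => // i; rewrite big_set1.
Qed.

Lemma esym_card n (x : 'I_n -> X) : esym n x = \prod_i x i.
Proof.
rewrite /esym (big_pred1 setT) => [|A]; first by apply: eq_bigl => i; rewrite inE.
rewrite /= -[n in _ == n]card_ord -cardsT; apply/eqP/eqP => [An|->] //.
by apply/eqP; rewrite eqEcard subsetT An leqnn.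
Qed.

Definition pow_mon n (i : 'I_n) k : monom X n := (1, [ffun j => if j == i then k else 0%N]).

Definition power_sum n k : fpoly X n := [seq pow_mon i k | i <- enum 'I_n].

Lemma mperm_pow_mon n (s : 'S_n) i k : mperm s (pow_mon i k) = pow_mon (s^-1 i)%g k.
Proof.
congr pair; apply/ffunP => j; rewrite !ffunE.
by congr (if _ then _ else _); apply/eqP/eqP => [<-|->]; rewrite ?permK ?permKV.
Qed.

Lemma power_sum_symmetric n k : symmetric_expr (power_sum n k).
Proof.
move=> s; have -> : map (mperm s) (power_sum n k) =
    [seq pow_mon i k | i <- [seq (s^-1)%g i | i <- enum 'I_n]].
  by rewrite -!map_comp; apply: eq_map => i; apply: mperm_pow_mon.
apply/perm_map/uniq_perm => [||i]; first exact: enum_uniq.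
  by rewrite (map_inj_uniq (@perm_inj _ _)) enum_uniq.
by rewrite mem_enum; apply/sym_eq/mapP; exists (s i); rewrite ?mem_enum ?permK.
Qed.

Lemma peval_power_sum n k (x : 'I_n -> X) : peval (power_sum n k) x = \sum_i x i ^+ k.
Proof.
rewrite /peval big_map big_enum /=; apply: eq_bigr => i _.
rewrite mul1r (bigD1 i) //= big1 => [|j ji]; rewrite !ffunE ?eqxx ?mulr1 //.
by rewrite (negbTE ji).
Qed.

Definition vec2 (u v : X) : 'I_2 -> X := fun j => if j == ord0 then u else v.

Lemma mon_vec2 u v f : mon (vec2 u v) f = u ^+ f ord0 * v ^+ f ord_max.
Proof.
rewrite /mon !big_ord_recl big_ord0 mulr1 /vec2 /=.
by congr (_ * _ ^+ f _); apply: val_inj.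
Qed.

Lemma esyms_vec2 u v : esyms (vec2 u v) =1 vec2 (u + v) (u * v).
Proof.
case=> [[|[|//]] j2]; rewrite /esyms /=; first by rewrite esym1 !big_ord_recl big_ord0 addr0.
by rewrite esym_card !big_ord_recl big_ord0 mulr1.
Qed.

Lemma peval_vec2 (r : fpoly X 2) u v :
  peval r (vec2 u v) = \sum_(m <- r) m.1 * (u ^+ m.2 ord0 * v ^+ m.2 ord_max).
Proof. by apply: eq_bigr => m _; rewrite -mon_vec2. Qed.

Lemma peval_vec2_le (r : fpoly X 2) u v :
  intrinsic_le (peval r (vec2 u 0)) (peval r (vec2 u v)).
Proof.
pose at0 (m : monom X 2) := m.2 ord_max == 0%N.
exists (\sum_(m <- r | ~~ at0 m) m.1 * (u ^+ m.2 ord0 * v ^+ m.2 ord_max)).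
rewrite !peval_vec2 (bigID at0) [in RHS](bigID at0) /=.
rewrite [X in _ + X + _]big1 ?addr0 => [|m m0]; last first.
  by rewrite expr0n -/(at0 m) (negbTE m0) !mulr0.
by congr (_ + _); apply: eq_bigr => m /eqP m0; rewrite m0 !expr0.
Qed.

Lemma intrinsic_le_exprD (x y : X) k :
  intrinsic_le (x ^+ k.+1 + y ^+ k.+1) ((x + y) ^+ k.+1).
Proof.
elim: k => [|k [z IH]]; first by exists 0; rewrite !expr1 addr0.
exists (x * y ^+ k.+1 + y * x ^+ k.+1 + (x + y) * z).
by rewrite [(x + y) ^+ _]exprS -IH (exprS x k.+1) (exprS y k.+1); ring.
Qed.

Lemma frobenius_of_elementary : n_elementary X 2 -> upper_bound X -> frobenius X.
Proof.
move=> el2 ub x y [//|k] _.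
have [r Er] := el2 _ (@power_sum_symmetric 2 k.+1).
have sum2 u v : \sum_(i < 2) vec2 u v i ^+ k.+1 = u ^+ k.+1 + v ^+ k.+1.
  by rewrite !big_ord_recl big_ord0 addr0.
have at0 : (x + y) ^+ k.+1 = peval r (vec2 (x + y) 0).
  have := Er (vec2 (x + y) 0); rewrite peval_power_sum sum2 expr0n addr0 => ->.
  by apply: eq_peval => j; have := esyms_vec2 (x + y) 0 j; rewrite addr0 mulr0.
have atxy : x ^+ k.+1 + y ^+ k.+1 = peval r (vec2 (x + y) (x * y)).
  by rewrite -sum2 -peval_power_sum Er; apply: eq_peval; apply: esyms_vec2.
apply: ub; last exact: intrinsic_le_exprD.
by rewrite at0 atxy; apply: peval_vec2_le.
Qed.

Lemma idempotent_of_frobenius : frobenius X -> two_cancellative X -> idempotent_sr X.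
Proof.
move=> frob tc x; have two : 1 + 1 = 1 :> X.
  have := frob 1 1 2%N isT; rewrite !expr1n expr2 mulrDl mul1r.
  exact: tc.
by rewrite -{1 2}[x]mulr1 -mulrDr two mulr1.
Qed.

End ElementaryToFrobenius.

Theorem theorem4p6 (X : comPzSemiRingType) :
  (fully_elementary X /\ upper_bound X /\ two_cancellative X) <->
  (frobenius X /\ idempotent_sr X).
Proof.
split=> [[el [ub tc]]|[frob idem]].
  have frob := frobenius_of_elementary (el 2%N) ub.
  by split; last exact: idempotent_of_frobenius.
split; first exact: fully_elementary_of_frobenius.
split=> [a b /(idem_leP idem) ab /(idem_leP idem) ba | x y]; first exact: idem_le_anti.
by rewrite !idem.
Qed.
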